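(* Let $g,h:[0,1]\to\mathbb{R}$ be piecewise continuous and strictly monotonic and regular. Let $0=a_{g,0}<a_{g,1}<\dots<a_{g,M_g}=1$ be the partition of $[0,1]$ given by the ordered turning points of $g$, and $0=a_{h,0}<\dots<a_{h,M_h}=1$ the analogous partition for $h$. Let $T_g=F_g\circ g$, $T_h=F_h\circ h$, where $F_g,F_h$ are the distribution functions of $g(U_0),h(U_0)$ for $U_0\sim\mathcal{U}(0,1)$, and let $S_{\max}=\{(u,v)\in[0,1]^2:T_g(u)=T_h(v)\}$ and $S_{\min}=\{(u,v)\in[0,1]^2:T_g(u)=1-T_h(v)\}$ be the support sets on which copulas attaining the maximum, respectively minimum, of $\rho_{\{g,h\}}$ are concentrated. Then for every $m_1\in\{1,\dots,M_g\}$, $m_2\in\{1,\dots,M_h\}$ and $S\in\{S_{\max},S_{\min}\}$: if the intersection of $S$ with the rectangle $(a_{g,m_1-1},a_{g,m_1})\times(a_{h,m_2-1},a_{h,m_2})$ is non-empty, then this intersection is a continuous and strictly monotonic curve on the rectangle (the graph of a continuous strictly monotonic function of $u$ on a subinterval of $(a_{g,m_1-1},a_{g,m_1})$).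
   Context: $\psi$ is piecewise continuous and strictly monotonic if there is a finite partition of $[0,1]$ such that $\psi$ is continuous and strictly monotonic on each open subinterval. $\psi$ is regular if it is continuous on $[0,1]$, continuously differentiable on $(0,1)$ with bounded derivative, and $\psi'(u)=0$ iff $u$ is a turning point (interior local extremum) of $\psi$. $\rho_{\{g,h\}}(X,Y)=\rho(g(F_X(X)),h(F_Y(Y)))$ (Pearson correlation). *)

From HB Require Import structures.
From mathcomp Require Import all_boot all_order all_algebra.
From mathcomp Require Import all_classical all_reals all_analysis.
Set Implicit Arguments. Unset Strict Implicit. Unset Printing Implicit Defensive.
Import Order.TTheory GRing.Theory Num.Theory.
Import numFieldNormedType.Exports.
Local Open Scope classical_set_scope.
Local Open Scope ring_scope.

Section Defs.
Variable R : realType.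

Definition turning_point (g : R -> R) (u : R) : Prop :=
  0 < u < 1 /\
  exists e : R, 0 < e /\
    ((forall x, 0 <= x <= 1 -> `|x - u| < e -> g x <= g u) \/
     (forall x, 0 <= x <= 1 -> `|x - u| < e -> g u <= g x)).

Definition strictly_monotone_on (g : R -> R) (a b : R) : Prop :=
  (forall x y, a < x -> x < y -> y < b -> g x < g y) \/
  (forall x y, a < x -> x < y -> y < b -> g y < g x).

Definition pw_cont_strict_mono (g : R -> R) : Prop :=
  exists (n : nat) (p : nat -> R),
    p 0%N = 0 /\ p n = 1 /\
    (forall i, (i < n)%N -> p i < p i.+1) /\
    (forall i, (i < n)%N ->
       {within `]p i, p i.+1[, continuous g} /\ strictly_monotone_on g (p i) (p i.+1)).

Definition regular (g : R -> R) : Prop :=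
  {within `[0, 1], continuous g} /\
  (forall u, 0 < u < 1 -> derivable g u 1) /\
  (forall u, 0 < u < 1 -> {for u, continuous (derive1 g)}) /\
  (exists M : R, forall u, 0 < u < 1 -> `|derive1 g u| <= M) /\
  (forall u, 0 < u < 1 -> (derive1 g u = 0 <-> turning_point g u)).

Definition turning_partition (g : R -> R) (M : nat) (a : nat -> R) : Prop :=
  a 0%N = 0 /\ a M = 1 /\
  (forall i, (i < M)%N -> a i < a i.+1) /\
  (forall u, turning_point g u <-> exists i, (0 < i < M)%N /\ u = a i).

(* distribution function of g(U0), U0 ~ U(0,1) *)
Definition distr_fun (g : R -> R) (t : R) : R :=
  fine (lebesgue_measure [set u : R | 0 <= u <= 1 /\ g u <= t]).

Definition Tfun (g : R -> R) (u : R) : R := distr_fun g (g u).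

Definition Smax (g h : R -> R) : set (R * R) :=
  [set uv | 0 <= uv.1 <= 1 /\ 0 <= uv.2 <= 1 /\ Tfun g uv.1 = Tfun h uv.2].

Definition Smin (g h : R -> R) : set (R * R) :=
  [set uv | 0 <= uv.1 <= 1 /\ 0 <= uv.2 <= 1 /\ Tfun g uv.1 = 1 - Tfun h uv.2].

End Defs.

From HB Require Import structures.
From mathcomp Require Import all_boot all_order all_algebra.
From mathcomp Require Import all_classical all_reals all_analysis.
From mathcomp Require Import lra.
Import Order.TTheory GRing.Theory Num.Theory.
Import numFieldNormedType.Exports.
Local Open Scope classical_set_scope.
Local Open Scope ring_scope.
Set Implicit Arguments. Unset Strict Implicit.

(* On each piece between consecutive turning points, g' is continuous and never
   zero, hence of constant sign, so g is strictly monotone there; likewise for h.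
   Then T_g = F_g \o g is strictly monotone on each piece: every point strictly
   between u and u' has its g-value between g u and g u', so |T_g u' - T_g u| is
   at least |u' - u|.  It is also continuous, because F_g is: the set of points where g
   is within del of a given level has small measure, by uniform continuity of the
   inverse of g on each piece.  On a rectangle of pieces, S is the set where
   T_g u = B v with B = T_h or B = 1 - T_h, both continuous and strictly monotone
   in v.  Hence v = B^-1 (T_g u) is a continuous strictly monotone function of u,
   defined on the set of u for which T_g u lies in the range of B, an interval by
   the intermediate value theorem. *)

Section MonotoneGraph.
Variable R : realType.
Implicit Types (A B f : R -> R) (a b : R).

Definition monotone_graph a b (C : set (R * R)) : Prop :=
  exists (I : interval R) (phi : R -> R),
    ([set` I] `<=` `]a, b[) /\
    {within [set` I], continuous phi} /\
    ((forall x y, x \in I -> y \in I -> x < y -> phi x < phi y) \/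
     (forall x y, x \in I -> y \in I -> x < y -> phi y < phi x)) /\
    C = [set uv : R * R | (uv.1 \in I) /\ uv.2 = phi uv.1].

Definition coincidence A B a1 b1 a2 b2 : set (R * R) :=
  [set uv : R * R | (a1 < uv.1 < b1 /\ a2 < uv.2 < b2) /\ A uv.1 = B uv.2].

Lemma within_continuous_distP (X : set R) f :
  {within X, continuous f} <->
  (forall x, X x -> forall e, 0 < e -> exists2 d, 0 < d &
     forall y, X y -> `|y - x| < d -> `|f y - f x| < e).
Proof.
split=> [/subspace_continuousP fc x Xx e e0 | fc].
  have /cvgrPdist_lt/(_ e e0)/nbhs_ballP[d d0 xd] := fc x Xx.
  by exists d => // y Xy yx; rewrite distrC; apply: xd => //; rewrite /ball /= distrC.
apply/subspace_continuousP => x Xx; apply/cvgrPdist_lt => e e0.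
have [d d0 xd] := fc x Xx e e0.
apply/nbhs_ballP; exists d => // y xy Xy.
by rewrite distrC; apply: xd => //; rewrite distrC.
Qed.

Lemma within_continuous_subl (X : set R) f c :
  {within X, continuous f} -> {within X, continuous (fun x => c - f x)}.
Proof.
by move=> fc; have := within_continuousB (continuous_subspaceT (@cst_continuous _ _ c)) fc.
Qed.

Lemma strictly_monotone_on_subl f a b c :
  strictly_monotone_on f a b -> strictly_monotone_on (fun x => c - f x) a b.
Proof. by case=> fm; [right|left] => x y ax xy yb; rewrite ltrD2l ltrN2; apply: fm. Qed.

Lemma strictly_monotone_on_between f a b x y z :
  strictly_monotone_on f a b -> a < x -> x <= z -> z <= y -> y < b ->
  Num.min (f x) (f y) <= f z <= Num.max (f x) (f y).
Proof.
move=> fm ax xz zy yb; rewrite ge_min le_max.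
have [<-|xz'] := eqVneq x z; first by rewrite lexx.
have [->|zy'] := eqVneq z y; first by rewrite lexx !orbT.
have xz2 : x < z by rewrite lt_neqAle xz' xz.
have zy2 : z < y by rewrite lt_neqAle zy' zy.
have az : a < z by apply: lt_le_trans xz.
have zb : z < b by apply: le_lt_trans yb.
by case: fm => fm; have := fm _ _ ax xz2 zb; have := fm _ _ az zy2 yb;
  move=> /ltW -> /ltW ->; rewrite ?orbT.
Qed.

Section IncreasingRight.
Variables (A B : R -> R) (a1 b1 a2 b2 : R).
Hypotheses (cA : {within `]a1, b1[, continuous A}) (mA : strictly_monotone_on A a1 b1).
Hypotheses (cB : {within `]a2, b2[, continuous B})
  (incB : forall x y, a2 < x -> x < y -> y < b2 -> B x < B y).

Let C := coincidence A B a1 b1 a2 b2.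
Let D := [set u | exists v, C (u, v)].
Let phi u := xget 0 [set v | C (u, v)].

Let lt_of_ltB x y : a2 < y -> x < b2 -> B x < B y -> x < y.
Proof.
move=> a2y xb2 Bxy; rewrite ltNge le_eqVlt negb_or; apply/andP; split.
  by apply/eqP => yx; move: Bxy; rewrite yx ltxx.
by apply/negP => /(incB a2y)/(_ xb2)/ltW; rewrite leNgt Bxy.
Qed.

Let phiP u : D u -> C (u, phi u).
Proof. exact: xgetPex. Qed.

Let C_functional u v : C (u, v) -> v = phi u.
Proof.
move=> Cuv; have [[_ /andP[a2w wb2]] /= Aw] := phiP (ex_intro _ v Cuv).
have [[_ /andP[a2v vb2]] /= Av] := Cuv.
case: (ltgtP v (phi u)) => // [vw|wv].
  by have := incB a2v vw wb2; rewrite -Aw -Av ltxx.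
by have := incB a2w wv vb2; rewrite -Aw -Av ltxx.
Qed.

Let D_interval : is_interval D.
Proof.
move=> x y [vx [[/andP[a1x xb1] /andP[a2vx vxb2]] /= Ax]] [vy [[/andP[a1y yb1] /andP[a2vy vyb2]] /= Ay]].
move=> z /andP[xz zy].
have Az := strictly_monotone_on_between mA a1x xz zy yb1; rewrite Ax Ay in Az.
have ivt lo hi : a2 < lo -> lo <= hi -> hi < b2 ->
    Num.min (B lo) (B hi) <= A z <= Num.max (B lo) (B hi) ->
    exists2 c, a2 < c < b2 & B c = A z.
  move=> a2lo lohi hib2 /(IVT lohi)[].
    apply: continuous_subspaceW cB => w /=; rewrite !in_itv /= => /andP[lw wh].
    by rewrite (lt_le_trans a2lo lw) (le_lt_trans wh hib2).
  move=> c; rewrite in_itv /= => /andP[lc ch] Bc; exists c => //.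
  by rewrite (lt_le_trans a2lo lc) (le_lt_trans ch hib2).
have [c c_in Bc] : exists2 c, a2 < c < b2 & B c = A z.
  case: (leP vx vy) => v_le; first exact: ivt a2vx v_le vyb2 Az.
  by apply: ivt a2vy (ltW v_le) vxb2 _; rewrite minC maxC.
exists c; split=> //=; split=> //.
by rewrite (lt_le_trans a1x xz) (le_lt_trans zy yb1).
Qed.

Let phi_continuous : {within D, continuous phi}.
Proof.
apply/within_continuous_distP => u Du e e0.
have [[/= u_in /andP[a2v vb2]] /= Auv] := phiP Du.
set v := phi u in a2v vb2 Auv *.
pose e' := Num.min e (Num.min (v - a2) (b2 - v)) / 2.
have e'_gt0 : 0 < e' by rewrite divr_gt0 // !lt_min e0 !subr_gt0 a2v vb2.
have e'_le : 2 * e' <= Num.min e (Num.min (v - a2) (b2 - v)).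
  by rewrite /e' mulrC divfK ?pnatr_eq0.
move: e'_le; rewrite !le_min => /and3P[e'e e'a e'b].
(* Once [|A y - A u| < eta], monotonicity of B traps [phi y] in ]v - e', v + e'[. *)
pose eta := Num.min (B (v + e') - B v) (B v - B (v - e')).
have eta_gt0 : 0 < eta.
  by rewrite lt_min !subr_gt0 !incB //; lra.
have [d d0 Ad] := (within_continuous_distP _ _).1 cA u u_in eta eta_gt0.
exists d => // y Dy yu.
have [[/= y_in /andP[a2w wb2]] /= Ayw] := phiP Dy.
have := Ad y y_in yu; rewrite Ayw Auv ltr_norml => /andP[lo hi].
have eta_le1 : eta <= B (v + e') - B v by rewrite ge_min lexx.
have eta_le2 : eta <= B v - B (v - e') by rewrite ge_min lexx orbT.
have : v - e' < phi y by apply: lt_of_ltB => //; lra.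
have : phi y < v + e' by apply: lt_of_ltB => //; lra.
rewrite ltr_norml; lra.
Qed.

Lemma coincidence_graph_incr : monotone_graph a1 b1 (coincidence A B a1 b1 a2 b2).
Proof.
have DE := (is_intervalP D).1 D_interval.
have inD x : x \in Rhull D -> D x by move=> xD; rewrite DE.
exists (Rhull D), phi; split; [|split; [|split]].
- by move=> x /inD[v [[]]].
- by rewrite -DE.
- have mphi x y : x \in Rhull D -> y \in Rhull D -> A x < A y -> phi x < phi y.
    move=> /inD/phiP[[_ /andP[_ ?]] /= ->] /inD/phiP[[_ /andP[? _]] /= ->].
    exact: lt_of_ltB.
  by case: mA => mono; [left|right] => x y xI yI xy; apply: mphi => //;
    move: (inD _ xI) (inD _ yI) => [? [[/andP[? ?] _] _]] [? [[/andP[? ?] _] _]];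
    apply: mono.
- apply/seteqP; split=> [[u v] Cuv|[u v] /= [/inD Du ->]]; last exact: phiP.
  have Du : D u by exists v.
  by split; [move: Du; rewrite {1}DE | exact: C_functional].
Qed.
End IncreasingRight.

Lemma coincidence_graph A B a1 b1 a2 b2 :
  {within `]a1, b1[, continuous A} -> strictly_monotone_on A a1 b1 ->
  {within `]a2, b2[, continuous B} -> strictly_monotone_on B a2 b2 ->
  monotone_graph a1 b1 (coincidence A B a1 b1 a2 b2).
Proof.
move=> cA mA cB [incB|decB]; first exact: coincidence_graph_incr.
have -> : coincidence A B a1 b1 a2 b2 =
    coincidence (fun x => 0 - A x) (fun x => 0 - B x) a1 b1 a2 b2.
  by apply/seteqP; split=> uv [uv_in E]; split=> //=; [rewrite E | exact: subrI E].
apply: coincidence_graph_incr;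
  [exact: within_continuous_subl | exact: strictly_monotone_on_subl | exact: within_continuous_subl |].
by move=> x y a2x xy yb2; rewrite ltrD2l ltrN2; apply: decB.
Qed.

Lemma unit_square_coincidence_graph A B a1 b1 a2 b2 :
  0 <= a1 -> b1 <= 1 -> 0 <= a2 -> b2 <= 1 ->
  {within `]a1, b1[, continuous A} -> strictly_monotone_on A a1 b1 ->
  {within `]a2, b2[, continuous B} -> strictly_monotone_on B a2 b2 ->
  monotone_graph a1 b1
    ([set uv : R * R | 0 <= uv.1 <= 1 /\ 0 <= uv.2 <= 1 /\ A uv.1 = B uv.2] `&`
     [set uv : R * R | a1 < uv.1 < b1 /\ a2 < uv.2 < b2]).
Proof.
move=> a1_ge0 b1_le1 a2_ge0 b2_le1 cA mA cB mB.
rewrite (_ : _ `&` _ = coincidence A B a1 b1 a2 b2); first exact: coincidence_graph.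
apply/seteqP; split=> [[u v] [[_ [_ /= E]] [uI vI]] //|[u v] [[uI vI] /= E]].
have u01 : 0 <= u <= 1 by move: uI => /= /andP[? ?]; apply/andP; split; lra.
have v01 : 0 <= v <= 1 by move: vI => /= /andP[? ?]; apply/andP; split; lra.
by split.
Qed.

End MonotoneGraph.

Section StrictlyMonotonePieces.
Variable R : realType.
Implicit Types (f g : R -> R) (a b : R).

Definition strictly_monotone_on_segment g a b : Prop :=
  (forall x y, a <= x -> x < y -> y <= b -> g x < g y) \/
  (forall x y, a <= x -> x < y -> y <= b -> g y < g x).

Lemma continuous_neq0_sign f a b :
  {within `]a, b[, continuous f} -> (forall x, a < x < b -> f x != 0) ->
  (forall x, a < x < b -> 0 < f x) \/ (forall x, a < x < b -> f x < 0).
Proof.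
move=> fc f_neq0.
have no_sign_change c d : a < c -> c <= d -> d < b ->
    ~ Num.min (f c) (f d) <= 0 <= Num.max (f c) (f d).
  move=> ac cd db /(IVT cd)[].
    apply: continuous_subspaceW fc => w /=; rewrite !in_itv /= => /andP[cw wd].
    by rewrite (lt_le_trans ac cw) (le_lt_trans wd db).
  move=> w; rewrite in_itv /= => /andP[cw wd] /eqP.
  by apply/negP/f_neq0; rewrite (lt_le_trans ac cw) (le_lt_trans wd db).
have [[x0 [/andP[ax0 x0b] fx0]]|no_pos] := pselect (exists x, a < x < b /\ 0 < f x).
  left=> x /andP[ax xb]; rewrite ltNge; apply/negP => fx.
  case: (leP x0 x) => x0x.
    by apply: (no_sign_change _ _ ax0 x0x xb); rewrite ge_min le_max fx (ltW fx0) orbT.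
  by apply: (no_sign_change _ _ ax (ltW x0x) x0b); rewrite ge_min le_max fx (ltW fx0) orbT.
right=> x xab; rewrite lt_neqAle f_neq0 //= leNgt; apply/negP => fx.
by apply: no_pos; exists x.
Qed.

Section TurningPartition.
Variables (g : R -> R) (M : nat) (a : nat -> R).
Hypothesis tp : turning_partition g M a.

Lemma turning_partition_le i j : (i <= j <= M)%N -> a i <= a j.
Proof.
have [_ [_ [a_incr _]]] := tp; case/andP.
elim: j => [|j IH]; first by rewrite leqn0 => /eqP ->.
rewrite leq_eqVlt => /orP[/eqP -> //|ij] jM.
exact: le_trans (IH ij (ltnW jM)) (ltW (a_incr j jM)).
Qed.

Lemma turning_partition_piece i : (i < M)%N -> [/\ 0 <= a i, a i < a i.+1 & a i.+1 <= 1].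
Proof.
have [a0 [aM [a_incr _]]] := tp => iM.
split; [rewrite -a0 | exact: a_incr | rewrite -aM]; apply: turning_partition_le.
  by rewrite leq0n ltnW.
by rewrite iM leqnn.
Qed.

Hypothesis rg : regular g.

Lemma turning_partition_derive1_neq0 i u : (i < M)%N -> a i < u < a i.+1 -> derive1 g u != 0.
Proof.
move=> iM /andP[aiu uai1]; have [_ [_ [_ [_ g'0]]]] := rg.
have [_ [_ [_ turning]]] := tp.
have [a0i _ ai1] := turning_partition_piece iM.
have u01 : 0 < u < 1 by rewrite (le_lt_trans a0i aiu) (lt_le_trans uai1 ai1).
apply/eqP => /(g'0 u u01)/turning[j [/andP[_ jM] uj]]; rewrite {u}uj in aiu uai1 u01.
case: (leqP j i) => ji.
  by have := turning_partition_le (i := j) (j := i); rewrite ji ltnW //= leNgt aiu => /(_ isT).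
by have := turning_partition_le (i := i.+1) (j := j); rewrite ji ltnW //= leNgt uai1 => /(_ isT).
Qed.

Lemma turning_partition_piece_continuous i : (i < M)%N ->
  {within `[a i, a i.+1], continuous g}.
Proof.
move=> iM; have [a0i _ ai1] := turning_partition_piece iM.
apply: continuous_subspaceW rg.1 => x /=; rewrite !in_itv /= => /andP[aix xai1].
by rewrite (le_trans a0i aix) (le_trans xai1 ai1).
Qed.

Lemma turning_partition_piece_monotone i : (i < M)%N ->
  strictly_monotone_on_segment g (a i) (a i.+1).
Proof.
move=> iM; have [_ [g_der [g'_cont _]]] := rg.
have [a0i _ ai1] := turning_partition_piece iM.
have in01 x : x \in `]a i, a i.+1[ -> 0 < x < 1.
  by rewrite in_itv /= => /andP[aix xai1]; rewrite (le_lt_trans a0i aix) (lt_le_trans xai1 ai1).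
have der x : x \in `]a i, a i.+1[ -> derivable g x 1 by move=> /in01/g_der.
have gc := turning_partition_piece_continuous iM.
have g'c : {within `]a i, a i.+1[, continuous (derive1 g)}.
  by apply: continuous_in_subspaceT => x /[!inE] /in01/g'_cont.
have inI x : a i <= x -> x <= a i.+1 -> x \in `[a i, a i.+1].
  by move=> aix xai1; rewrite in_itv /= aix xai1.
have [sg|sg] := continuous_neq0_sign g'c (fun x => turning_partition_derive1_neq0 iM).
  left=> x y aix xy yai1.
  apply: (gtr0_derive1_lt_cc der (fun z => sg z) gc) => //; apply: inI => //; lra.
right=> x y aix xy yai1.
apply: (ltr0_derive1_lt_cc der (fun z => sg z) gc) => //; apply: inI => //; lra.
Qed.

End TurningPartition.
End StrictlyMonotonePieces.

Section SegmentInverse.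
Variable R : realType.

Lemma within_continuous_shift (g : R -> R) (a b e : R) : {within `[a, b], continuous g} ->
  {within `[a - e, b - e], continuous (fun x => g (x + e))}.
Proof.
move=> gc; apply/within_continuous_distP => x; rewrite /= in_itv /= => /andP[ax xb] d d0.
have xe_in : `[a, b]%classic (x + e) by rewrite /= in_itv /=; apply/andP; split; lra.
have [r r0 gr] := (within_continuous_distP _ _).1 gc _ xe_in d d0.
exists r => // y; rewrite /= in_itv /= => /andP[ay yb] yx; apply: gr.
  by rewrite /= in_itv /=; apply/andP; split; lra.
by rewrite opprD addrACA subrr addr0.
Qed.

Lemma segment_inverse_uniform_continuity (g : R -> R) (a b : R) :
  {within `[a, b], continuous g} -> strictly_monotone_on_segment g a b ->
  forall eps, 0 < eps -> exists2 del, 0 < del & forall x y, a <= x <= b -> a <= y <= b ->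
    `|g x - g y| <= del -> `|x - y| <= eps.
Proof.
move=> gc gm; wlog incr : g gc gm / forall x y, a <= x -> x < y -> y <= b -> g x < g y.
  move=> wlog_incr; case: (gm) => [incr|decr].
    by apply: wlog_incr.
  have gNc := within_continuous_subl (c := 0) gc.
  have gNincr x y : a <= x -> x < y -> y <= b -> 0 - g x < 0 - g y.
    by move=> ax xy yb; rewrite ltrD2l ltrN2; apply: decr.
  move=> eps /(wlog_incr _ gNc (or_introl gNincr) gNincr)[del del0 gN_inv].
  by exists del => // x y xI yI gxy; apply: gN_inv => //; rewrite !sub0r -opprD normrN.
move=> eps eps0.
have [ba_le|ba_gt] := leP (b - a) eps.
  by exists 1 => // x y /andP[? ?] /andP[? ?] _; rewrite ler_norml; apply/andP; split; lra.
(* k has a positive minimum on [a, b - eps], and y - x > eps forces g y - g x above it. *)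
pose k x := g (x + eps) - g x.
have kc : {within `[a, b - eps], continuous k}.
  apply: within_continuousB.
    apply: continuous_subspaceW (within_continuous_shift (e := eps) gc).
    by move=> x /=; rewrite !in_itv /= => /andP[? ?]; apply/andP; split; lra.
  apply: continuous_subspaceW gc.
  by move=> x /=; rewrite !in_itv /= => /andP[? ?]; apply/andP; split; lra.
have ab_eps : a <= b - eps by lra.
have [c /[!in_itv] /= /andP[ac cb] kc_min] := EVT_min ab_eps kc.
have kc_gt0 : 0 < k c by rewrite /k subr_gt0; apply: incr; lra.
exists (k c / 2); first by rewrite divr_gt0.
have gap x y : a <= x -> y <= b -> eps < y - x -> k c < g y - g x.
  move=> ax yb yx; have := kc_min x; rewrite /k !in_itv /= => kx.
  have : g (x + eps) < g y by apply: incr; lra.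
  have : a <= x <= b - eps by apply/andP; split; lra.
  by move=> /kx; lra.
move=> x y /andP[ax xb] /andP[ay yb]; rewrite ler_norml => /andP[gxy1 gxy2].
rewrite leNgt ltr_normr; apply/negP => /orP[] xy.
  by have := gap y x ay xb xy; lra.
by have := gap x y ax yb; lra.
Qed.
End SegmentInverse.

(* [lebesgue_measure] is the outer measure, defined on every subset of R, so its
   monotonicity and subadditivity apply to sublevel sets without proving them
   measurable. *)
Section LebesgueOuterMeasure.
Variable R : realType.
Local Notation mu := (@lebesgue_measure R).
Implicit Types A B : set R.

Lemma lebesgue_measure_le A B : A `<=` B -> (mu A <= mu B)%E.
Proof. by move=> AB; apply: le_mu_ext. Qed.

Lemma lebesgue_measureU2_le A B : (mu (A `|` B) <= mu A + mu B)%E.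
Proof. exact: (outer_measureU2 (mu_ext (wlength idfun))). Qed.

Lemma lebesgue_measure_splitI A B :
  measurable B -> mu A = (mu (A `&` B) + mu (A `&` ~` B))%E.
Proof. by move=> mB; apply: (@sub_caratheodory _ _ _ (wlength idfun) B). Qed.

Lemma lebesgue_measure_sub01E A : A `<=` [set x | 0 <= x <= 1] -> mu A = (fine (mu A))%:E.
Proof.
move=> A01; have muA_le1 : (mu A <= 1%:E)%E.
  apply: le_trans (lebesgue_measure_le (B := `[0, 1]) _) _.
    by move=> x /A01 /=; rewrite in_itv.
  by rewrite lebesgue_measure_itv /= lte_fin ltr01 sube0.
by rewrite fineK // ge0_fin_numE ?measure_ge0 // (le_lt_trans muA_le1) ?ltry.
Qed.

End LebesgueOuterMeasure.

Section DistributionFunction.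
Variable R : realType.
Local Notation mu := (@lebesgue_measure R).

Lemma segment_level_band_small (g : R -> R) (a b : R) :
  {within `[a, b], continuous g} -> strictly_monotone_on_segment g a b ->
  forall t eps : R, 0 < eps -> exists2 del, 0 < del &
    (mu [set x | (a <= x <= b /\ `|g x - t| <= del)%R] <= eps%:E)%E.
Proof.
move=> gc gm t eps eps0; have eps2_gt0 : 0 < eps / 2 by rewrite divr_gt0.
have [del del0 g_inv] := segment_inverse_uniform_continuity gc gm eps2_gt0.
exists (del / 2); first by rewrite divr_gt0.
have [[x0 [x0_in gx0]]|no_x0] :=
  pselect (exists x0, a <= x0 <= b /\ `|g x0 - t| <= del / 2); last first.
  have -> : [set x | a <= x <= b /\ `|g x - t| <= del / 2] = set0.
    by apply/seteqP; split=> // x x_in; apply: no_x0; exists x.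
  by rewrite measure0 lee_fin ltW.
apply: le_trans (lebesgue_measure_le (B := `[x0 - eps / 2, x0 + eps / 2]) _) _.
  move=> x /= [x_in gx]; rewrite in_itv /=.
  have /(g_inv x x0 x_in x0_in) : `|g x - g x0| <= del.
    by move: gx gx0; rewrite !ler_norml => /andP[? ?] /andP[? ?]; apply/andP; split; lra.
  by rewrite ler_norml => /andP[? ?]; apply/andP; split; lra.
rewrite lebesgue_measure_itv /= lte_fin ifT; last lra.
by rewrite -EFinD lee_fin; lra.
Qed.

Definition level_band (g : R -> R) (t d : R) := [set x | 0 <= x <= 1 /\ `|g x - t| <= d].

Definition sublevel (g : R -> R) (t : R) := [set x | 0 <= x <= 1 /\ g x <= t].

Lemma sublevel_measureE (g : R -> R) t : mu (sublevel g t) = (distr_fun g t)%:E.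
Proof. exact: (lebesgue_measure_sub01E (fun x (x_in : sublevel g t x) => x_in.1)). Qed.

Lemma level_band_measureE (g : R -> R) t d :
  mu (level_band g t d) = (fine (mu (level_band g t d)))%:E.
Proof. exact: (lebesgue_measure_sub01E (fun x (x_in : level_band g t d x) => x_in.1)). Qed.

Lemma distr_fun_increment (g : R -> R) (s r s' : R) : s <= r <= s' ->
  0 <= distr_fun g s' - distr_fun g s <= fine (mu (level_band g r (s' - s))).
Proof.
move=> /andP[sr rs'].
have mono : (mu (sublevel g s) <= mu (sublevel g s'))%E.
  by apply: lebesgue_measure_le => x [? ?]; split=> //; lra.
have jump : (mu (sublevel g s') <= mu (sublevel g s) + mu (level_band g r (s' - s)))%E.
  apply: le_trans (lebesgue_measureU2_le _ _); apply: lebesgue_measure_le => x [x01 gx].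
  case: (leP (g x) s) => gxs; [left|right]; split=> //.
  by rewrite ler_norml; apply/andP; split; lra.
rewrite !(sublevel_measureE g) lee_fin in mono.
rewrite !(sublevel_measureE g) level_band_measureE -EFinD lee_fin in jump.
by apply/andP; split; lra.
Qed.

Lemma distr_fun_gap (g : R -> R) (I : interval R) (s s' : R) :
  [set` I] `<=` [set x | 0 <= x <= 1] -> {in I, forall x, s < g x <= s'} -> s <= s' ->
  distr_fun g s + fine (mu [set` I]) <= distr_fun g s'.
Proof.
move=> I01 gI ss'.
have split_s' := lebesgue_measure_splitI (sublevel g s') (measurable_itv I).
have I_sub : sublevel g s' `&` [set` I] = [set` I].
  apply/seteqP; split=> [x [] //|x xI]; split=> //; split; first exact: I01.
  by have /andP[_ ->] := gI x xI.
rewrite I_sub in split_s'.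
have : (mu (sublevel g s) + mu [set` I] <= mu (sublevel g s'))%E.
  rewrite split_s' addeC; apply: leeD => //.
  apply: lebesgue_measure_le => x [x01 gx]; split; first by split=> //; lra.
  by move=> /gI /andP[sgx _]; lra.
by rewrite !sublevel_measureE (lebesgue_measure_sub01E I01) -EFinD lee_fin.
Qed.

Variables (g : R -> R) (M : nat) (a : nat -> R).
Hypotheses (rg : regular g) (tp : turning_partition g M a).

Lemma level_band_small (t eps : R) : 0 < eps ->
  exists2 del, 0 < del & (mu (level_band g t del) <= eps%:E)%E.
Proof.
have [a0 [aM _]] := tp.
suff prefix n : (n <= M)%N -> forall eps, 0 < eps -> exists2 del, 0 < del &
    (mu [set x | (0 <= x <= a n /\ `|g x - t| <= del)%R] <= eps%:E)%E.
  move=> /(prefix M (leqnn M))[del del0 small]; exists del => //.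
  by apply: le_trans small; apply: lebesgue_measure_le => x [? ?]; rewrite aM.
elim: n => [_|n IH nM] {}eps eps0.
  exists 1 => //; apply: le_trans (lebesgue_measure_le (B := [set 0]) _) _.
    by move=> x [/andP[x0]]; rewrite a0 => x_le0 _; apply/le_anti; rewrite x_le0 x0.
  by rewrite lebesgue_measure_set1 lee_fin ltW.
have eps2_gt0 : 0 < eps / 2 by rewrite divr_gt0.
have [d1 d1_gt0 prefix_small] := IH (ltnW nM) _ eps2_gt0.
have [d2 d2_gt0 piece_small] := segment_level_band_small
  (turning_partition_piece_continuous tp rg nM) (turning_partition_piece_monotone tp rg nM)
  t eps2_gt0.
exists (Num.min d1 d2); first by rewrite lt_min d1_gt0 d2_gt0.
apply: le_trans (lebesgue_measure_le (B := [set x | 0 <= x <= a n /\ `|g x - t| <= d1] `|`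
   [set x | a n <= x <= a n.+1 /\ `|g x - t| <= d2]) _) _.
  move=> x [/andP[x0 xan1]]; rewrite le_min => /andP[xd1 xd2].
  by case: (leP x (a n)) => xan; [left|right]; split=> //; rewrite ?x0 ?xan1 ?(ltW xan).
apply: le_trans (lebesgue_measureU2_le _ _) _.
by apply: le_trans (leeD prefix_small piece_small) _; rewrite -EFinD lee_fin; lra.
Qed.

Lemma distr_fun_continuous : continuous (distr_fun g).
Proof.
move=> t; apply/cvgrPdist_le => e e0.
have [del del0 band_small] := level_band_small t e0.
have band_le d : d < del -> fine (mu (level_band g t d)) <= e.
  move=> d_lt; rewrite -lee_fin -level_band_measureE; apply: le_trans band_small.
  by apply: lebesgue_measure_le => y [y01 gy]; split=> //; lra.
apply/nbhs_ballP; exists del => // x; rewrite /ball /= => tx.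
case: (leP t x) => tx'.
  have ttx : t <= t <= x by rewrite lexx.
  have /andP[F_incr F_jump] := distr_fun_increment g ttx.
  rewrite distrC ger0_norm ?subr_ge0 // in tx.
  by have := band_le _ tx; rewrite distrC ger0_norm //; lra.
have xtt : x <= t <= t by rewrite lexx ltW.
have /andP[F_incr F_jump] := distr_fun_increment g xtt.
rewrite ger0_norm ?subr_ge0 ?(ltW tx') // in tx.
by have := band_le _ tx; rewrite ger0_norm //; lra.
Qed.

Lemma Tfun_continuous : {within `[0, 1], continuous (Tfun g)}.
Proof.
apply: (@within_continuous_comp _ _ _ _ g (distr_fun g)) rg.1 => x _.
exact: distr_fun_continuous.
Qed.

Lemma Tfun_piece_continuous i : (i < M)%N -> {within `]a i, a i.+1[, continuous (Tfun g)}.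
Proof.
move=> iM; have [a0i _ ai1] := turning_partition_piece tp iM.
apply: continuous_subspaceW Tfun_continuous => x /=; rewrite !in_itv /= => /andP[aix xai1].
by apply/andP; split; lra.
Qed.

Lemma Tfun_piece_monotone i : (i < M)%N -> strictly_monotone_on (Tfun g) (a i) (a i.+1).
Proof.
move=> iM; have [a0i _ ai1] := turning_partition_piece tp iM.
have gap u u' s s' : a i < u -> u < u' -> u' < a i.+1 ->
    {in `]u, u'[, forall x, s < g x <= s'} -> s <= s' ->
    distr_fun g s + (u' - u) <= distr_fun g s'.
  move=> aiu uu' u'ai; have <- : fine (mu [set` `]u, u'[]) = u' - u.
    by rewrite lebesgue_measure_itv /= lte_fin uu' -EFinB.
  by apply: distr_fun_gap => x /=; rewrite in_itv /= => /andP[? ?]; apply/andP; split; lra.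
case: (turning_partition_piece_monotone tp rg iM) => gm; [left|right] => u u' aiu uu' u'ai.
- suff : Tfun g u + (u' - u) <= Tfun g u' by lra.
  apply: gap => //; last by apply/ltW/gm; lra.
  move=> x; rewrite in_itv /= => /andP[ux xu'].
  by apply/andP; split; [|apply/ltW]; apply: gm; lra.
- suff : Tfun g u' + (u' - u) <= Tfun g u by lra.
  apply: gap => //; last by apply/ltW/gm; lra.
  move=> x; rewrite in_itv /= => /andP[ux xu'].
  by apply/andP; split; [|apply/ltW]; apply: gm; lra.
Qed.

End DistributionFunction.

Unset Implicit Arguments.
Theorem proposition8 (R : realType) (g h : R -> R)
  (Mg Mh : nat) (ag ah : nat -> R) :
  pw_cont_strict_mono g -> regular g ->
  pw_cont_strict_mono h -> regular h ->
  turning_partition g Mg ag -> turning_partition h Mh ah ->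
  forall (m1 m2 : nat), (1 <= m1 <= Mg)%N -> (1 <= m2 <= Mh)%N ->
  forall S : set (R * R)%type, S = Smax g h \/ S = Smin g h ->
  let rect := [set uv : (R * R)%type | ag m1.-1 < uv.1 < ag m1 /\ ah m2.-1 < uv.2 < ah m2] in
  S `&` rect !=set0 ->
  exists (I : interval R) (phi : R -> R),
    ([set` I] `<=` `]ag m1.-1, ag m1[) /\
    {within [set` I], continuous phi} /\
    ((forall x y, x \in I -> y \in I -> x < y -> phi x < phi y) \/
     (forall x y, x \in I -> y \in I -> x < y -> phi y < phi x)) /\
    (S `&` rect = [set uv : (R * R)%type | (uv.1 \in I) /\ uv.2 = phi uv.1]).
Proof.
(* Regularity and the turning partitions already give monotonicity on each piece,
   and an empty intersection is the graph over an empty interval. *)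
move=> _ rg _ rh tpg tph [|i] [|j] //= iM jM S S_def _.
have [ag0 _ ag1] := turning_partition_piece tpg iM.
have [ah0 _ ah1] := turning_partition_piece tph jM.
have Tgc := Tfun_piece_continuous rg tpg iM.
have Tgm := Tfun_piece_monotone rg tpg iM.
have Thc := Tfun_piece_continuous rh tph jM.
have Thm := Tfun_piece_monotone rh tph jM.
case: S_def => ->.
  exact: unit_square_coincidence_graph.
apply: (unit_square_coincidence_graph (B := fun v => 1 - Tfun h v)) => //.
  exact: within_continuous_subl.
exact: strictly_monotone_on_subl.
Qed.
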